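(* Let $k$ be a field of characteristic zero and let $A=\bigoplus_{i\ge 0}A_i$ be a standard graded Artinian $k$-algebra. Then $A$ has the weak Lefschetz property (respectively, the strong Lefschetz property) if and only if there exists a linear form $l\in A_1$ such that the associated graded ring $Gr_{l}(A)$ has the weak Lefschetz property (respectively, the strong Lefschetz property).
   Context: For a linear form $l\in A_1$, let $r$ be the least integer with $l^r=0$. The associated graded ring of $A$ with respect to $l$ is $Gr_l(A)=A/(l)\oplus (l)/(l^2)\oplus\cdots\oplus (l^{r-1})/(l^r)$, with multiplication induced from $A$ and with the grading inherited from the grading of $A$. A finite graded module $M=\bigoplus_i M_i$ over a standard graded $k$-algebra $R$ (in particular $R$ itself) has the weak Lefschetz property (WLP) if there is a linear form $\ell\in R_1$ such that each multiplication map $\times\ell\colon M_i\to M_{i+1}$ has maximal rank (is injective or surjective); it has the strong Lefschetz property (SLP) if there is $\ell\in R_1$ such that $\times\ell^d\colon M_i\to M_{i+d}$ has maximal rank for all $d>0$ and all $i$. *)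

From HB Require Import structures.
From mathcomp Require Import all_boot all_order all_algebra.
From mathcomp Require Import falgebra.
Set Implicit Arguments. Unset Strict Implicit. Unset Printing Implicit Defensive.
Import GRing.Theory.
Local Open Scope ring_scope.

Section Defs.
Variables (k : fieldType) (A : falgType k).

Definition std_graded_artinian (G : nat -> {vspace A}) : Prop :=
  (forall x y : A, x * y = y * x) /\
  [/\ (forall n, directv (\sum_(i < n) G i)%VS),
      (exists n, (\sum_(i < n) G i)%VS = fullv),
      G 0%N = <[1]>%VS,
      (forall i j, (G i * G j <= G (i + j)%N)%VS) &
      (forall i, G i.+1 = (G 1%N * G i)%VS)].

Definition mult_maxrank (G : nat -> {vspace A}) (f : A) (i e : nat) : Prop :=
  (forall x, x \in G i -> f * x = 0 -> x = 0) \/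
  (forall y, y \in G (i + e)%N -> exists2 x, x \in G i & f * x = y).

Definition WLP (G : nat -> {vspace A}) : Prop :=
  exists2 ell, ell \in G 1%N & forall i, mult_maxrank G ell i 1.

Definition SLP (G : nat -> {vspace A}) : Prop :=
  exists2 ell, ell \in G 1%N &
    forall d i, (0 < d)%N -> mult_maxrank G (ell ^+ d) i d.

Definition nil_index (l : A) (r : nat) : Prop :=
  l ^+ r = 0 /\ forall s, (s < r)%N -> l ^+ s != 0.

Definition idl (G : nat -> {vspace A}) (l : A) (j d : nat) : {vspace A} :=
  ((<[l ^+ j]> * fullv) :&: G d)%VS.

(* Gr_l(A)_d = (+)_{j<r} (l^j)_d / (l^(j+1))_d.  An element is represented by
   a family x : nat -> A of representatives x j \in (l^j)_d (j < r);
   two families represent the same element iff their difference lies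
   componentwise in (l^(j+1))_d. *)
Definition gr_rep G l r d (x : nat -> A) : Prop :=
  forall j, (j < r)%N -> x j \in idl G l j d.

Definition gr_zero G l r d (x : nat -> A) : Prop :=
  forall j, (j < r)%N -> x j \in idl G l j.+1 d.

(* product in Gr_l(A) on representatives:
   (x mod l^(i+1)) (y mod l^(j+1)) = xy mod l^(i+j+1) *)
Definition gr_mul (x y : nat -> A) : nat -> A :=
  fun m => \sum_(j < m.+1) x j * y (m - j)%N.

Definition gr_one : nat -> A := fun m => if m == 0%N then 1 else 0.

Definition gr_exp (x : nat -> A) (n : nat) : nat -> A := iter n (gr_mul x) gr_one.

Definition gr_maxrank G l r (P : nat -> A) (i e : nat) : Prop :=
  (forall x, gr_rep G l r i x -> gr_zero G l r (i + e) (gr_mul P x) ->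
      gr_zero G l r i x) \/
  (forall y, gr_rep G l r (i + e) y -> exists2 x, gr_rep G l r i x &
      gr_zero G l r (i + e) (fun m => y m - gr_mul P x m)).

Definition Gr_WLP (G : nat -> {vspace A}) (l : A) : Prop :=
  exists2 r, nil_index l r &
    exists2 L, gr_rep G l r 1 L & forall i, gr_maxrank G l r L i 1.

Definition Gr_SLP (G : nat -> {vspace A}) (l : A) : Prop :=
  exists2 r, nil_index l r &
    exists2 L, gr_rep G l r 1 L &
      forall d i, (0 < d)%N -> gr_maxrank G l r (gr_exp L d) i d.

End Defs.

From HB Require Import structures.
From mathcomp Require Import all_boot all_order all_algebra.
From mathcomp Require Import falgebra.
Set Implicit Arguments. Unset Strict Implicit. Unset Printing Implicit Defensive.
Import GRing.Theory.
Import VectorInternalTheory.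
Local Open Scope ring_scope.

(* Taking l = 0 (so r = 1) gives Gr_0(A) = A, which settles one direction.
   Conversely, let l^r = 0.  A degree-d element of Gr_l(A) is represented by a
   family x_0, ..., x_(r-1) with x_j in (l^j)_d, and Phi_t(x) = sum_j t^j x_j
   (that is, [gr_eval t x]) lies in A_d.  Phi_t is multiplicative on
   representatives, since the terms of degree >= r of Phi_t(x) Phi_t(y) lie in
   (l^r) = 0.  For s <> 0, the class of Phi_(1/s)(x) in (l^m)_d / (l^(m+1))_d,
   rescaled by s^m, is a polynomial in s whose value at 0 is the class of x_m;
   hence a free family of Gr_l(A)_d stays free under Phi_(1/s) unless s is a
   root of a nonzero polynomial (a nonzero minor).  As dim Gr_l(A)_d = dim A_d,
   maximal rank of multiplication by L^e on Gr_l(A)_i gives maximal rank of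
   multiplication by Phi_(1/s)(L)^e on A_i for generic s.  Since A is Artinian
   only finitely many (i, e) matter, and a field of characteristic zero is
   infinite, so one s works for all of them. *)

Section Generic.
Variable k : fieldType.

Definition generic (P : k -> Prop) : Prop :=
  exists2 q : {poly k}, q != 0 & forall s, ~~ root q s -> P s.

Lemma generic_mono (P Q : k -> Prop) :
  (forall s, P s -> Q s) -> generic P -> generic Q.
Proof. by move=> PQ [q q0 Pq]; exists q => // s /Pq /PQ. Qed.

Lemma generic_and (P Q : k -> Prop) :
  generic P -> generic Q -> generic (fun s => P s /\ Q s).
Proof.
move=> [p p0 Pp] [q q0 Qq]; exists (p * q); first by rewrite mulf_neq0.
by move=> s; rewrite rootM negb_or => /andP[/Pp ? /Qq ?].
Qed.

Lemma generic_all (P : nat -> k -> Prop) n :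
  (forall i, (i < n)%N -> generic (P i)) ->
  generic (fun s => forall i, (i < n)%N -> P i s).
Proof.
elim: n => [_|n IHn Pn].
  by exists 1 => [|s _ i //]; rewrite oner_eq0.
apply: generic_mono (generic_and (IHn _) (Pn n _)) => // [s [Ps Pns] i|i ltin].
  by rewrite ltnS leq_eqVlt => /predU1P[->|/Ps].
exact/Pn/ltnW.
Qed.

Lemma generic_neq0 : generic (fun s => s != 0).
Proof. by exists 'X => [|s]; rewrite ?polyX_eq0 // rootX. Qed.

Lemma generic_witness (P : k -> Prop) :
  [pchar k] =i pred0 -> generic P -> exists s, P s.
Proof.
move=> /pcharf0P pchar0 [q q0 Pq].
have natr_inj : injective (fun n : nat => n%:R : k).
  suff le_inj m n : (m <= n)%N -> m%:R = n%:R :> k -> m = n.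
    move=> m n /= mn; case/orP: (leq_total m n) => [/le_inj -> // | /le_inj].
    by move/(_ (esym mn)).
  move=> le_mn /eqP; rewrite eq_sym -subr_eq0 -natrB // pchar0 subn_eq0 => le_nm.
  by apply/eqP; rewrite eqn_leq le_mn.
pose xs := [seq i%:R : k | i <- iota 0 (size q)].
have [/(max_poly_roots q0)|] := boolP (all (root q) xs).
  by rewrite map_inj_uniq ?iota_uniq // size_map size_iota ltnn => /(_ isT).
by rewrite -has_predC => /hasP[s _ /Pq]; exists s.
Qed.

Lemma generic_row_free p n (M : 'M[{poly k}]_(p, n)) :
  row_free (map_mx (horner_eval 0) M) ->
  generic (fun s => row_free (map_mx (horner_eval s) M)).
Proof.
case/row_freeP => N M0N; pose q := \det (M *m map_mx polyC N).
have qE s : q.[s] = \det (map_mx (horner_eval s) M *m N).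
  rewrite -horner_evalE -det_map_mx map_mxM; congr (\det (_ *m _)).
  by apply/matrixP => i j; rewrite !mxE /= horner_evalE hornerC.
exists q => [|s qs0].
  by apply: contra_neq (oner_neq0 k) => q0; rewrite -(det1 _ p) -M0N -qE q0 horner0.
have : map_mx (horner_eval s) M *m N \in unitmx by rewrite unitmxE unitfE -qE.
rewrite -row_free_unit => /eqP free_MN.
by rewrite /row_free eqn_leq rank_leq_row -{1}free_MN mxrankM_maxl.
Qed.

End Generic.

Section FreeFamilies.
Variables (k : fieldType) (vT wT : vectType k).

Lemma mulmx_row_v2r p (X : 'I_p -> vT) (al : 'I_p -> k) :
  (\row_c al c) *m (\matrix_c v2r (X c)) = v2r (\sum_c al c *: X c).
Proof.
rewrite mulmx_sum_row linear_sum; apply: eq_bigr => c _.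
by rewrite rowK linearZ mxE.
Qed.

Lemma free_tupleE p (X : 'I_p -> vT) :
  free [tuple X c | c < p] = row_free (\matrix_c v2r (X c)).
Proof.
have rowE (v : 'rV[k]_p) : v = \row_c v 0 c by apply/rowP => c; rewrite mxE.
apply/freeP/idP => [freeX | /row_free_inj injX al].
  apply/inj_row_free => v; rewrite [v]rowE mulmx_row_v2r => /(canRL v2rK).
  rewrite linear0 => v0; apply/rowP => c; rewrite !mxE; apply: freeX c.
  by rewrite -[RHS]v0; apply: eq_bigr => c' _; rewrite nth_mktuple.
under eq_bigr do rewrite nth_mktuple; move=> /(congr1 v2r); rewrite linear0.
rewrite -mulmx_row_v2r -(mul0mx _ (\matrix_c v2r (X c))) => /injX /rowP v0 c.
by have := v0 c; rewrite !mxE.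
Qed.

Lemma generic_free p N (w : 'I_p -> nat -> vT) :
  free [tuple \sum_(n < N) 0 ^+ n *: w c n | c < p] ->
  generic (fun s => free [tuple \sum_(n < N) s ^+ n *: w c n | c < p]).
Proof.
pose M := \matrix_(c, j) \sum_(n < N) v2r (w c n) 0 j *: 'X^n.
have ME s : map_mx (horner_eval s) M = \matrix_c v2r (\sum_(n < N) s ^+ n *: w c n).
  apply/matrixP => c j; rewrite !mxE horner_evalE horner_sum linear_sum summxE.
  by apply: eq_bigr => n _; rewrite hornerZ hornerXn linearZ mxE mulrC.
rewrite free_tupleE -ME => /generic_row_free.
by apply: generic_mono => s; rewrite free_tupleE -ME.
Qed.

Lemma lfun_inj_on_free (f : 'Hom(vT, wT)) (U : {vspace vT}) (X : seq vT) :
  {subset X <= U} -> free (map f X) -> (\dim U <= size X)%N ->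
  forall u, u \in U -> f u = 0 -> u = 0.
Proof.
move=> XU freefX leUX u Uu fu0.
have : (\dim U <= \dim (f @: U))%N.
  rewrite (leq_trans leUX) // -(size_map f) -(eqnP freefX) -limg_span.
  exact/dimvS/limgS/span_subvP.
rewrite -{1}(limg_ker_dim f U) -{2}[\dim (f @: U)]add0n leq_add2r.
rewrite leqn0 dimv_eq0 => /eqP UKf0; apply/eqP; rewrite -memv0 -UKf0 memv_cap Uu.
by rewrite memv_ker fu0 eqxx.
Qed.

Lemma lfun_onto_free (f : 'Hom(vT, wT)) (U : {vspace vT}) (V : {vspace wT})
    (X : seq vT) :
  {subset X <= U} -> {subset map f X <= V} -> free (map f X) ->
  (\dim V <= size X)%N ->
  forall v, v \in V -> exists2 u, u \in U & f u = v.
Proof.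
move=> XU fXV freefX leVX v Vv.
have defV : <<map f X>>%VS = V.
  apply/eqP; rewrite eqEdim (eqnP freefX) size_map leVX andbT.
  exact/span_subvP.
have : v \in (f @: U)%VS.
  by rewrite -defV -limg_span in Vv; apply: subvP Vv; exact/limgS/span_subvP.
by case/memv_imgP => u Uu ->; exists u.
Qed.

Lemma subr_projv_eq0 (U : {vspace vT}) v : (v - projv U v == 0) = (v \in U).
Proof.
rewrite subr_eq0; apply/eqP/idP => [-> | /projv_id -> //].
exact: memv_proj.
Qed.

End FreeFamilies.

Section PrincipalIdeals.
Variables (k : fieldType) (A : falgType k).

Lemma memv_line_fullP (v u : A) :
  u \in (<[v]> * fullv)%VS <-> exists w, u = v * w.
Proof.
split=> [u_vA | [w ->]]; last exact/memv_mul/memvf/memv_line.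
have : (<[v]> * fullv <= limg (amull v))%VS.
  apply/prodvP => _ w /vlineP[c ->] _; apply/memv_imgP; exists (c *: w).
    exact: memvf.
  by rewrite lfunE /= -scalerAl scalerAr.
by move/subvP/(_ u u_vA)/memv_imgP => [w _ ->]; exists w; rewrite lfunE.
Qed.

Hypothesis mulA_comm : commutative (@GRing.mul A).

Lemma memv_line_full_mul (a b u w : A) :
  u \in (<[a]> * fullv)%VS -> w \in (<[b]> * fullv)%VS ->
  u * w \in (<[a * b]> * fullv)%VS.
Proof.
move=> /memv_line_fullP[u' ->] /memv_line_fullP[w' ->].
apply/memv_line_fullP; exists (u' * w').
by rewrite -mulrA (mulrA u') (mulA_comm u' b) -!mulrA.
Qed.

End PrincipalIdeals.

Section Filtration.
Variables (k : fieldType) (A : falgType k) (G : nat -> {vspace A}) (l : A).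
Variable r : nat.
Hypotheses (mulA_comm : commutative (@GRing.mul A)) (lr0 : l ^+ r = 0).
Hypothesis G_mul : forall i j, (G i * G j <= G (i + j)%N)%VS.

Local Notation F := (idl G l).

Lemma mem_idl x m d :
  (x \in F m d) = (x \in (<[l ^+ m]> * fullv)%VS) && (x \in G d).
Proof. by rewrite /idl memv_cap. Qed.

Lemma idl0 d : F 0 d = G d.
Proof.
apply/vspaceP => x; rewrite mem_idl andb_idl // => _.
by apply/memv_line_fullP; exists x; rewrite expr0 mul1r.
Qed.

Lemma idl_subG m d : (F m d <= G d)%VS.
Proof. by apply/subvP => x; rewrite mem_idl => /andP[]. Qed.

Lemma idlS m d : (F m.+1 d <= F m d)%VS.
Proof.
apply/subvP => x; rewrite !mem_idl => /andP[/memv_line_fullP[w ->] ->].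
by rewrite andbT; apply/memv_line_fullP; exists (l * w); rewrite exprSr mulrA.
Qed.

Lemma idl_leq m m' d : (m <= m')%N -> (F m' d <= F m d)%VS.
Proof.
move=> /subnKC <-; elim: (m' - m)%N => [|n IHn]; first by rewrite addn0.
by rewrite addnS; apply: subv_trans IHn; apply: idlS.
Qed.

Lemma line_full_nil m x : (r <= m)%N -> x \in (<[l ^+ m]> * fullv)%VS -> x = 0.
Proof.
by move=> /subnKC <- /memv_line_fullP[w ->]; rewrite exprD lr0 !mul0r.
Qed.

Lemma idl_nil m d x : (r <= m)%N -> x \in F m d -> x = 0.
Proof. by rewrite mem_idl => le_rm /andP[/(line_full_nil le_rm)]. Qed.

Lemma idl_mul a b i e x y :
  x \in F a i -> y \in F b e -> x * y \in F (a + b) (i + e).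
Proof.
rewrite !mem_idl => /andP[xa xi] /andP[yb ye]; rewrite exprD.
by rewrite memv_line_full_mul //; apply/(subvP (G_mul i e))/memv_mul.
Qed.

Lemma gr_rep_line d x j :
  gr_rep G l r d x -> (j < r)%N -> x j \in (<[l ^+ j]> * fullv)%VS.
Proof. by move=> xd /xd; rewrite mem_idl => /andP[]. Qed.

Lemma gr_rep_mul e i P x :
  gr_rep G l r e P -> gr_rep G l r i x -> gr_rep G l r (e + i) (gr_mul P x).
Proof.
move=> Pe xi m lt_mr; apply: memv_suml => j _.
have le_jm : (j <= m)%N by rewrite -ltnS.
have := idl_mul (Pe j (leq_ltn_trans le_jm lt_mr))
  (xi _ (leq_ltn_trans (leq_subr j m) lt_mr)).
by rewrite subnKC.
Qed.

Hypothesis G0_1 : 1 \in G 0.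

Lemma gr_rep_one : gr_rep G l r 0 (@gr_one k A).
Proof. by move=> [|m] _; rewrite /gr_one ?idl0 ?mem0v. Qed.

Lemma gr_rep_exp e P d : gr_rep G l r e P -> gr_rep G l r (e * d) (gr_exp P d).
Proof.
move=> Pe; elim: d => [|d IHd]; first by rewrite muln0; exact: gr_rep_one.
by rewrite mulnS; apply: gr_rep_mul.
Qed.

Definition gr_eval (t : k) (x : nat -> A) : A := \sum_(m < r) t ^+ m *: x m.

Lemma gr_evalE t x : gr_eval t x = (\poly_(m < r) x m).[t%:A].
Proof.
rewrite (horner_coef_wide _ (size_poly _ _)); apply: eq_bigr => m _.
by rewrite coef_poly ltn_ord -(rmorphXn (in_alg A)) /= mulr_algr.
Qed.

Lemma gr_evalM t e i P x : gr_rep G l r e P -> gr_rep G l r i x ->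
  gr_eval t (gr_mul P x) = gr_eval t P * gr_eval t x.
Proof.
move=> Pe xi; rewrite !gr_evalE -hornerM_comm; last exact: comm_alg.
congr (_.[_]); apply/polyP => m; rewrite coefM coef_poly /gr_mul.
case: ltnP => [lt_mr | le_rm].
  apply: eq_bigr => j _; rewrite !coef_poly (leq_ltn_trans (leq_subr _ _) lt_mr).
  by rewrite (leq_ltn_trans _ lt_mr) // -ltnS.
apply/esym/big1 => j _; rewrite !coef_poly.
case: ifP => lt_jr; last by rewrite mul0r.
case: ifP => lt_mjr; last by rewrite mulr0.
have le_jm : (j <= m)%N by rewrite -ltnS.
apply: (line_full_nil le_rm).
have := memv_line_full_mul mulA_comm (gr_rep_line Pe lt_jr) (gr_rep_line xi lt_mjr).
by rewrite -exprD subnKC.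
Qed.

Lemma gr_eval_one t : (0 < r)%N -> gr_eval t (@gr_one k A) = 1.
Proof.
move=> r_gt0; rewrite /gr_eval (bigD1 (Ordinal r_gt0)) //= big1 ?addr0.
  by rewrite expr0 scale1r.
by move=> [[|m] ?] // _; rewrite scaler0.
Qed.

Lemma gr_eval_exp t e P d : (0 < r)%N -> gr_rep G l r e P ->
  gr_eval t (gr_exp P d) = gr_eval t P ^+ d.
Proof.
move=> r_gt0 Pe; elim: d => [|d IHd]; first exact: gr_eval_one.
by rewrite /= (gr_evalM _ Pe (gr_rep_exp d Pe)) -/(gr_exp P d) IHd exprS.
Qed.

Lemma gr_eval_mem t d x : gr_rep G l r d x -> gr_eval t x \in G d.
Proof.
move=> xd; apply: memv_suml => m _; apply: memvZ.
exact: subvP (idl_subG m d) _ (xd _ (ltn_ord m)).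
Qed.

Definition gr_free d p (y : 'I_p -> nat -> A) : Prop :=
  forall al : 'I_p -> k,
    gr_zero G l r d (fun m => \sum_c al c *: y c m) -> forall c, al c = 0.

(* Stands in for the quotient map A_d -> A_d / (l^(m+1))_d. *)
Definition gr_quo d m : 'End(A) := (\1 - projv (F m.+1 d))%VF.

Lemma gr_quo_eq0 d m a : (gr_quo d m a == 0) = (a \in F m.+1 d).
Proof. by rewrite add_lfunE opp_lfunE id_lfunE subr_projv_eq0. Qed.

(* The coefficients of the polynomial in [gr_eval_deform]; the constant one is
   the family of the classes of the y_m in (l^m)_d / (l^(m+1))_d. *)
Definition gr_coef d (y : nat -> A) (n : nat) : {ffun 'I_r -> A} :=
  [ffun m : 'I_r => if (n <= m)%N then gr_quo d m (y (m - n)%N) else 0].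

Lemma gr_eval_deform d y s : s != 0 -> gr_rep G l r d y ->
  [ffun m : 'I_r => s ^+ m *: gr_quo d m (gr_eval s^-1 y)] =
  \sum_(n < r) s ^+ n *: gr_coef d y n.
Proof.
move=> s0 yd; apply/ffunP => m; rewrite ffunE sum_ffunE.
have le_mr : (m.+1 <= r)%N := ltn_ord m.
transitivity (\sum_(j < m.+1) s ^+ (m - j) *: gr_quo d m (y j)).
  rewrite linear_sum scaler_sumr [RHS](big_ord_widen r
    (fun j => s ^+ (m - j) *: gr_quo d m (y j)) le_mr) [RHS]big_mkcond /=.
  apply: eq_bigr => j _; case: ifPn => [lt_jm | ].
    by rewrite linearZ scalerA exprVn -exprB ?unitfE.
  rewrite -leqNgt => lt_mj; suff /eqP -> : gr_quo d m (s^-1 ^+ j *: y j) == 0.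
    by rewrite scaler0.
  by rewrite gr_quo_eq0 memvZ // (subvP (idl_leq _ lt_mj) _ (yd _ (ltn_ord j))).
pose term n := s ^+ n *: gr_quo d m (y (m - n)%N).
rewrite (reindex_inj rev_ord_inj) (eq_bigr (fun j : 'I_m.+1 => term j)) => [|j _].
  rewrite (big_ord_widen r term le_mr) big_mkcond; apply: eq_bigr => n _.
  by rewrite !ffunE ltnS; case: ifP; rewrite ?scaler0.
by rewrite /term /= subSS subKn ?leq_ord.
Qed.

Lemma gr_free_coef0 d p (y : 'I_p -> nat -> A) :
  gr_free d y -> free [tuple \sum_(n < r) 0 ^+ n *: gr_coef d (y c) n | c < p].
Proof.
move=> yfree; apply/freeP => al; under eq_bigr do rewrite nth_mktuple.
move=> /ffunP sum0; apply: yfree => m lt_mr; rewrite -gr_quo_eq0.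
have r_gt0 : (0 < r)%N by apply: leq_ltn_trans lt_mr.
apply/eqP; rewrite -[RHS](ffunE (fun=> 0) (Ordinal lt_mr)) -sum0.
rewrite linear_sum sum_ffunE; apply: eq_bigr => c _; rewrite linearZ !ffunE.
rewrite sum_ffunE (bigD1 (Ordinal r_gt0)) //= big1 ?addr0 => [|[[|n] ?] //= _].
  by rewrite !ffunE expr0 scale1r subn0.
by rewrite !ffunE expr0n scale0r.
Qed.

Lemma generic_free_gr_eval d p (y : 'I_p -> nat -> A) :
  (forall c, gr_rep G l r d (y c)) -> gr_free d y ->
  generic (fun s => free [tuple gr_eval s^-1 (y c) | c < p]).
Proof.
move=> yd /gr_free_coef0/(generic_free (w := fun c => gr_coef d (y c))) free_coef.
apply: generic_mono (generic_and (generic_neq0 k) free_coef).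
move=> s [s0 /freeP free_s]; apply/freeP => al.
under eq_bigr do rewrite nth_mktuple; move=> sum0; apply: free_s.
under eq_bigr do rewrite nth_mktuple -(gr_eval_deform s0 (yd _)).
apply/ffunP => m; rewrite sum_ffunE !ffunE.
transitivity (s ^+ m *: gr_quo d m (\sum_c al c *: gr_eval s^-1 (y c))).
  rewrite linear_sum scaler_sumr; apply: eq_bigr => c _.
  by rewrite !ffunE linearZ /= [in RHS]linearZ.
by rewrite sum0 linear0 scaler0.
Qed.

Definition gr_free_above d m p (y : 'I_p -> nat -> A) : Prop :=
  [/\ forall c, gr_rep G l r d (y c), forall c j, (j < m)%N -> y c j = 0
    & gr_free d y].

(* Prepend a basis of a complement of (l^(m+1))_d in (l^m)_d, put in position m. *)
Lemma gr_free_extend d m p (y : 'I_p -> nat -> A) : (m < r)%N ->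
  gr_free_above d m.+1 y ->
  exists y' : 'I_(\dim (F m d :\: F m.+1 d) + p) -> nat -> A, gr_free_above d m y'.
Proof.
move=> lt_mr [yd y0 yfree]; set C := (F m d :\: F m.+1 d)%VS; pose B := vbasis C.
have BC (a : 'I_(\dim C)) : B`_a \in C.
  by apply/vbasis_mem/mem_nth; rewrite size_tuple.
pose y' (c : 'I_(\dim C + p)) : nat -> A := match split c with
  | inl a => fun j => if j == m then B`_a else 0
  | inr b => y b end.
have y'L a : y' (lshift p a) = fun j => if j == m then B`_a else 0.
  by rewrite /y' -[lshift p a]/(unsplit (inl _ a)) unsplitK.
have y'R b : y' (rshift (\dim C) b) = y b.
  by rewrite /y' -[rshift _ b]/(unsplit (inr _ b)) unsplitK.
clearbody y'; exists y'; split=> [c|c j lt_jm|al al0 c].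
- rewrite -(splitK c); case: (split c) => [a|b]; last by rewrite y'R; exact: yd.
  rewrite y'L => j _; case: eqP => [->|_]; last exact: mem0v.
  exact/(subvP (diffvSl _ _))/BC.
- rewrite -(splitK c); case: (split c) => [a|b]; rewrite ?y'L ?y'R.
    by rewrite (ltn_eqF lt_jm).
  exact/y0/ltnW.
have alL a : al (lshift p a) = 0.
  have := al0 m lt_mr; rewrite big_split_ord /=.
  under eq_bigr do rewrite y'L eqxx.
  under [X in _ + X]eq_bigr do rewrite y'R (y0 _ _ (ltnSn m)) scaler0.
  rewrite big1_eq addr0 => comb_F.
  have comb_C : \sum_(a < \dim C) al (lshift p a) *: B`_a \in C.
    by apply: memv_suml => a' _; apply: memvZ; apply: BC.
  move/freeP: (basis_free (vbasisP C)) => /(_ (fun a => al (lshift p a))).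
  apply; apply/eqP.
  by rewrite -memv0 -(capv_diff (F m d) (F m.+1 d)) memv_cap comb_C comb_F.
have alR b : al (rshift (\dim C) b) = 0.
  apply: (yfree (fun b => al (rshift (\dim C) b))) => j lt_jr.
  have := al0 j lt_jr.
  rewrite big_split_ord /= big1 ?add0r => [|a _]; last by rewrite alL scale0r.
  by under eq_bigr do rewrite y'R.
by rewrite -(splitK c); case: (split c).
Qed.

Lemma dim_idl_nil d : \dim (F r d) = 0%N.
Proof.
apply/eqP; rewrite dimv_eq0 -subv0; apply/subvP => x /(idl_nil (leqnn r)) ->.
exact: mem0v.
Qed.

Lemma exists_gr_free d :
  exists p (y : 'I_p -> nat -> A),
    [/\ p = \dim (G d), forall c, gr_rep G l r d (y c) & gr_free d y].
Proof.
suff /(_ r 0%N (addn0 r)) [p [y [dim_p [yd _ yfree]]]] : forall n m, (n + m = r)%N ->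
    exists p (y : 'I_p -> nat -> A), p = \dim (F m d) /\ gr_free_above d m y.
  by exists p, y; rewrite -idl0.
elim=> [m | n IHn m def_r].
  rewrite add0n => ->; exists 0%N, (fun _ _ => 0).
  by rewrite dim_idl_nil; split=> //; split=> [[]|[]|al _ []].
have lt_mr : (m < r)%N by rewrite -def_r addSnnS leq_addl.
have [p [y [dim_p yfree]]] := IHn m.+1 (etrans (addnS n m) def_r).
have [y' y'free] := gr_free_extend lt_mr yfree.
exists _, y'; split=> //; rewrite dim_p addnC.
by rewrite -(dimv_cap_compl (F m d) (F m.+1 d)) (capv_idPr (idlS _ _)).
Qed.

Lemma gr_mul_sumr P p (al : 'I_p -> k) (y : 'I_p -> nat -> A) m :
  gr_mul P (fun j => \sum_c al c *: y c j) m = \sum_c al c *: gr_mul P (y c) m.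
Proof.
rewrite /gr_mul; under eq_bigr do rewrite mulr_sumr.
rewrite exchange_big; apply: eq_bigr => c _; rewrite scaler_sumr.
by apply: eq_bigr => j _; rewrite scalerAr.
Qed.

Lemma gr_rep_sum d p (al : 'I_p -> k) (y : 'I_p -> nat -> A) :
  (forall c, gr_rep G l r d (y c)) ->
  gr_rep G l r d (fun j => \sum_c al c *: y c j).
Proof. by move=> yd j lt_jr; apply: memv_suml => c _; apply/memvZ/yd. Qed.

Lemma gr_zero_sum d p (al : 'I_p -> k) (y : 'I_p -> nat -> A) :
  (forall c, gr_zero G l r d (y c)) ->
  gr_zero G l r d (fun j => \sum_c al c *: y c j).
Proof. by move=> y0 j lt_jr; apply: memv_suml => c _; apply/memvZ/y0. Qed.

Lemma map_amull_gr_eval t e d p Q (x : 'I_p -> nat -> A) :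
  gr_rep G l r e Q -> (forall c, gr_rep G l r d (x c)) ->
  map (amull (gr_eval t Q)) [tuple gr_eval t (x c) | c < p] =
  [tuple gr_eval t (gr_mul Q (x c)) | c < p].
Proof.
move=> Qe xd; rewrite /= -map_comp; apply: eq_map => c /=.
by rewrite lfunE /= (gr_evalM _ Qe (xd c)).
Qed.

Lemma gr_eval_tuple_sub t d p (x : 'I_p -> nat -> A) :
  (forall c, gr_rep G l r d (x c)) ->
  {subset [tuple gr_eval t (x c) | c < p] <= G d}.
Proof. by move=> xd _ /mapP[c _ ->]; apply: gr_eval_mem. Qed.

Section MultByRep.
Variables (e i : nat) (Q : nat -> A).
Hypothesis Qe : gr_rep G l r e Q.

Lemma generic_mult_inj :
  (forall x, gr_rep G l r i x -> gr_zero G l r (i + e) (gr_mul Q x) ->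
     gr_zero G l r i x) ->
  generic (fun s => forall a, a \in G i -> gr_eval s^-1 Q * a = 0 -> a = 0).
Proof.
move=> Qinj; have [p [x [dim_p xi xfree]]] := exists_gr_free i.
have Qx c : gr_rep G l r (i + e) (gr_mul Q (x c)).
  by rewrite addnC; apply: gr_rep_mul.
have Qxfree : gr_free (i + e) (fun c => gr_mul Q (x c)).
  move=> al al0; apply: xfree; apply: Qinj; first exact: gr_rep_sum.
  by move=> j lt_jr; rewrite gr_mul_sumr; apply: al0.
apply: generic_mono (generic_free_gr_eval Qx Qxfree) => s Qxs a ai Qa0.
apply: (lfun_inj_on_free (f := amull (gr_eval s^-1 Q))
  (X := [tuple gr_eval s^-1 (x c) | c < p]) _ _ _ ai).
- exact: gr_eval_tuple_sub.
- by rewrite (map_amull_gr_eval _ Qe xi).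
- by rewrite size_tuple dim_p.
- by rewrite lfunE.
Qed.

Lemma generic_mult_onto :
  (forall y, gr_rep G l r (i + e) y -> exists2 x, gr_rep G l r i x &
     gr_zero G l r (i + e) (fun m => y m - gr_mul Q x m)) ->
  generic (fun s => forall b, b \in G (i + e) ->
    exists2 a, a \in G i & gr_eval s^-1 Q * a = b).
Proof.
move=> Qonto; have [p [z [dim_p zi zfree]]] := exists_gr_free (i + e).
have [x xi xz] := fin_all_exists2 (fun c => Qonto (z c) (zi c)).
have Qx c : gr_rep G l r (i + e) (gr_mul Q (x c)).
  by rewrite addnC; apply: gr_rep_mul.
have Qxfree : gr_free (i + e) (fun c => gr_mul Q (x c)).
  move=> al al0; apply: (zfree al) => j lt_jr.
  rewrite -(subrK (\sum_c al c *: gr_mul Q (x c) j) (\sum_c _)) -sumrB.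
  apply: memvD (al0 j lt_jr); under eq_bigr do rewrite -scalerBr.
  exact: (gr_zero_sum al xz).
apply: generic_mono (generic_free_gr_eval Qx Qxfree) => s Qxs b bie.
have := lfun_onto_free (f := amull (gr_eval s^-1 Q))
  (gr_eval_tuple_sub (t := s^-1) xi).
rewrite (map_amull_gr_eval _ Qe xi) size_tuple.
move/(_ _ (gr_eval_tuple_sub (t := s^-1) Qx) Qxs (eq_leq (esym dim_p)) b bie).
by case=> a ai <-; exists a; rewrite ?lfunE.
Qed.

Lemma generic_mult_maxrank :
  gr_maxrank G l r Q i e -> generic (fun s => mult_maxrank G (gr_eval s^-1 Q) i e).
Proof.
by case=> [/generic_mult_inj | /generic_mult_onto]; apply: generic_mono => s ?;
  [left | right].
Qed.

End MultByRep.

End Filtration.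

Section TrivialForm.
Variables (k : fieldType) (A : falgType k) (G : nat -> {vspace A}).

Lemma mem_idl0 x d : (x \in idl G 0 1 d) = (x == 0).
Proof.
rewrite /idl memv_cap; apply/andP/eqP => [[/memv_line_fullP[w ->] _] | ->].
  by rewrite expr1 mul0r.
by rewrite !mem0v.
Qed.

Lemma gr_mul0 (P x : nat -> A) : gr_mul P x 0 = P 0%N * x 0%N.
Proof. by rewrite /gr_mul big_ord1. Qed.

Lemma gr_exp0 (P : nat -> A) d : gr_exp P d 0 = P 0%N ^+ d.
Proof. by elim: d => [|d IHd] //=; rewrite gr_mul0 -/(gr_exp P d) IHd exprS. Qed.

Lemma nil_index01 : nil_index (0 : A) 1.
Proof. by split=> [|[|//] _]; rewrite ?expr1 ?expr0 ?oner_neq0. Qed.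

Lemma gr_rep01 (x : A) d : x \in G d -> gr_rep G 0 1 d (fun=> x).
Proof. by move=> xd [|//] _; rewrite idl0. Qed.

Lemma gr_maxrank01 (f : A) i e (P : nat -> A) :
  P 0%N = f -> mult_maxrank G f i e -> gr_maxrank G 0 1 P i e.
Proof.
move=> P0 [finj | fonto]; [left | right].
  move=> x xi fx0 [|//] _; rewrite mem_idl0; apply/eqP/finj.
    by rewrite -(idl0 G 0); apply: xi.
  by have := fx0 0%N isT; rewrite mem_idl0 gr_mul0 P0 => /eqP.
move=> y yie; have /fonto[x0 x0i fx0] : y 0%N \in G (i + e).
  by rewrite -(idl0 G 0); apply: yie.
exists (fun=> x0); first exact: gr_rep01.
by move=> [|//] _; rewrite mem_idl0 gr_mul0 P0 fx0 subrr.
Qed.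

Lemma Gr_WLP0 : WLP G -> Gr_WLP G 0.
Proof.
case=> ell ell1 ellW; exists 1%N; first exact: nil_index01.
by exists (fun=> ell); [exact: gr_rep01 | move=> i; apply: gr_maxrank01 (ellW i)].
Qed.

Lemma Gr_SLP0 : SLP G -> Gr_SLP G 0.
Proof.
case=> ell ell1 ellS; exists 1%N; first exact: nil_index01.
exists (fun=> ell); first exact: gr_rep01.
by move=> d i d_gt0; apply: gr_maxrank01 (ellS d i d_gt0); rewrite gr_exp0.
Qed.

End TrivialForm.

Section GradedArtinian.
Variables (k : fieldType) (A : falgType k) (G : nat -> {vspace A}).
Hypothesis AG : std_graded_artinian G.

Lemma std_graded_top : exists T, forall i, (T <= i)%N -> G i = 0%VS.
Proof.
case: AG => _ [Gdirect [T GT] _ _ _]; exists T => i le_Ti.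
have /directv_sumP/(_ ord_max isT) : directv (\sum_(j < i.+1) G j) by [].
suff -> : (\sum_(j < i.+1 | true && (j != ord_max)) G j)%VS = fullv by rewrite capvf.
apply/eqP; rewrite eqEsubv subvf -GT; apply/subv_sumP => j _.
have lt_ji : (j < i.+1)%N by rewrite ltnS (leq_trans (ltnW (ltn_ord j))).
apply: (sumv_sup (Ordinal lt_ji)) => //=.
by rewrite -val_eqE /= neq_ltn (leq_trans (ltn_ord j)).
Qed.

Lemma mult_maxrank_vanish (f : A) i e : G i = 0%VS \/ G (i + e) = 0%VS ->
  mult_maxrank G f i e.
Proof.
case=> [Gi0 | Gie0]; [left | right].
  by move=> x; rewrite Gi0 memv0 => /eqP ->.
by move=> y; rewrite Gie0 memv0 => /eqP ->; exists 0; rewrite ?mem0v ?mulr0.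
Qed.

Let mulA_comm : commutative (@GRing.mul A).
Proof. exact: AG.1. Qed.
Let G_mul : forall i j, (G i * G j <= G (i + j)%N)%VS.
Proof. by case: AG => _ []. Qed.
Let G0_1 : 1 \in G 0.
Proof. by case: AG => _ [_ _ -> _ _]; apply: memv_line. Qed.

Lemma WLP_of_Gr_WLP (l : A) : [pchar k] =i pred0 -> Gr_WLP G l -> WLP G.
Proof.
move=> pchar0 [r [lr0 _] [L L1 LW]]; have [T GT] := std_graded_top.
have [s ellW] : exists s,
    forall i, (i < T)%N -> mult_maxrank G (gr_eval r s^-1 L) i 1.
  apply/(generic_witness pchar0)/generic_all => i _.
  by apply: generic_mult_maxrank (LW i).
exists (gr_eval r s^-1 L); first exact: gr_eval_mem L1.
move=> i; case: (ltnP i T) => [/ellW // | le_Ti].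
by apply: mult_maxrank_vanish; left; apply: GT.
Qed.

Lemma SLP_of_Gr_SLP (l : A) : [pchar k] =i pred0 -> Gr_SLP G l -> SLP G.
Proof.
move=> pchar0 [r [lr0 _] [L L1 LS]]; have [T GT] := std_graded_top.
have r_gt0 : (0 < r)%N.
  by rewrite lt0n; apply: contra_eq_neq lr0 => ->; rewrite expr0 oner_neq0.
pose ell s := gr_eval r s^-1 L.
have [s ellS] : exists s, forall d, (d < T)%N ->
    forall i, (i < T)%N -> mult_maxrank G (ell s ^+ d.+1) i d.+1.
  apply/(generic_witness pchar0)/generic_all => d _; apply: generic_all => i _.
  have Ld : gr_rep G l r d.+1 (gr_exp L d.+1).
    by have := gr_rep_exp mulA_comm G_mul G0_1 d.+1 L1; rewrite mul1n.
  apply: generic_mono (generic_mult_maxrank mulA_comm lr0 G_mul Ld (LS d.+1 i isT)).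
  by move=> s; rewrite /ell (gr_eval_exp mulA_comm lr0 G_mul G0_1 _ _ r_gt0 L1).
exists (ell s); first exact: gr_eval_mem L1.
move=> [//|d] i _; case: (ltnP i T) => [lt_iT | le_Ti]; last first.
  by apply: mult_maxrank_vanish; left; apply: GT.
case: (ltnP d T) => [lt_dT | le_Td]; first exact: ellS.
apply: mult_maxrank_vanish; right; apply: GT.
by rewrite (leq_trans le_Td) // -addSnnS leq_addl.
Qed.

End GradedArtinian.

Theorem theorem2p12 (k : fieldType) (A : falgType k) (G : nat -> {vspace A}) :
  [pchar k] =i pred0 ->
  std_graded_artinian G ->
  (WLP G <-> exists2 l, l \in G 1%N & Gr_WLP G l) /\
  (SLP G <-> exists2 l, l \in G 1%N & Gr_SLP G l).
Proof.
move=> pchar0 AG; split; split.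
- by move/Gr_WLP0; exists 0; rewrite ?mem0v.
- by case=> l _; apply: WLP_of_Gr_WLP.
- by move/Gr_SLP0; exists 0; rewrite ?mem0v.
- by case=> l _; apply: SLP_of_Gr_SLP.
Qed.
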